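(* Let $\mathbb K\in\{\mathbb R,\mathbb C\}$ and let $(g(x))_{x\ge0}$ be a semigroup of invertible linear maps on $\mathbb K^d$. For each $x\ge0$ let $g(x)=D(x)T(x)$ be the multiplicative Jordan–Chevalley decomposition of $g(x)$. Then $(D(x))_{x\ge0}$ and $(T(x))_{x\ge0}$ are each semigroups, and $T(x)D(y)=D(y)T(x)$ for all $x,y\ge0$.
   Context: A semigroup is a map $g:[0,\infty)\to L(\mathbb K^d)$ with $g(0)=\mathrm{id}$ and $g(x+y)=g(x)g(y)$ for all $x,y\ge0$. The multiplicative Jordan–Chevalley decomposition of an invertible linear map $A$ on $\mathbb K^d$ is the unique factorization $A=DT$ with $D$ diagonalizable (over $\mathbb C$), $T$ unipotent (i.e. $T-\mathrm{id}$ nilpotent), and $DT=TD$. *)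

From mathcomp Require Import all_boot all_order all_algebra.
From mathcomp Require Import complex.
From mathcomp Require Import reals.
Set Implicit Arguments. Unset Strict Implicit. Unset Printing Implicit Defensive.
Import Order.TTheory GRing.Theory Num.Theory.
Local Open Scope ring_scope.

(* k-th power of a square matrix (works for every size d, including d = 0). *)
Definition mxpow (K : pzRingType) (d : nat) (A : 'M[K]_d) (k : nat) : 'M[K]_d :=
  iter k (mulmx A) 1%:M.

Definition mx_nilpotent (K : pzRingType) (d : nat) (N : 'M[K]_d) : Prop :=
  exists k : nat, mxpow N k = 0.

Definition mx_unipotent (K : pzRingType) (d : nat) (T : 'M[K]_d) : Prop :=
  mx_nilpotent (T - 1%:M).

(* g : [0,oo) -> L(K^d) is a semigroup: g 0 = id, g (x+y) = g x g y for x,y >= 0.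
   (g is given as a function on all of R; only its values on [0,oo) matter.) *)
Definition mx_semigroup (R : realType) (K : pzRingType) (d : nat)
  (g : R -> 'M[K]_d) : Prop :=
  g 0 = 1%:M /\
  (forall x y : R, 0 <= x -> 0 <= y -> g (x + y) = g x *m g y).

(* A = D T is the multiplicative Jordan-Chevalley decomposition of A:
   D diagonalizable over C (after embedding the scalars K into C via toC),
   T unipotent, D T = T D. *)
Definition mult_JC_decomp (R : rcfType) (K : fieldType) (toC : K -> R[i])
  (d : nat) (A D T : 'M[K]_d) : Prop :=
  [/\ diagonalizable (map_mx toC D), mx_unipotent T,
      A = D *m T & D *m T = T *m D].

(* The proof rests on three facts about this decomposition over an
   arbitrary field F (with D diagonalizable over F):
   - commutant: every B commuting with A commutes with D and T.  With
     T = 1 + N, D is killed by a split squarefree polynomial p; evaluating at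
     A = D (1 + N) inside the commutative ring F[Y][X] (Y |-> D, X |-> N) shows
     r(A)^m is a multiple of r(D) when N^m = 0.  A Bezout argument on the
     factors (X - x)^m of p^m then forces the commutator B D - D B to vanish;
   - uniqueness: two decompositions of A commute with each other, so D1 - D2
     is both diagonalizable and nilpotent, hence zero;
   - multiplicativity: for commuting invertible A1, A2 the products D1 D2 and
     T1 T2 form the decomposition of A1 A2.
   For a semigroup g the values g x pairwise commute, so uniqueness applied to
   g (x + y) = g x g y yields the semigroup laws of D and T, and the commutant
   gives T x D y = D y T x.  The theorem over R or C is reduced to this by
   mapping all matrices into C, where diagonalizability is stated. *)

From mathcomp Require Import all_boot all_order all_algebra.
From mathcomp Require Import complex.
From mathcomp Require Import reals.
From mathcomp Require Import ring zify.
Set Implicit Arguments. Unset Strict Implicit. Unset Printing Implicit Defensive.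
Import Order.TTheory GRing.Theory Num.Theory.
Local Open Scope ring_scope.

Definition is_nilpotent (R : pzRingType) (x : R) : Prop := exists k, x ^+ k = 0.

Section Nilpotent.
Variable R : pzRingType.
Implicit Types x y : R.

Lemma nilpotentD x y : GRing.comm x y ->
  is_nilpotent x -> is_nilpotent y -> is_nilpotent (x + y).
Proof.
move=> cxy [a xa] [b yb]; exists (a + b)%N; rewrite exprDn_comm // big1 // => i _.
have [le_a|lt_a] := leqP a (a + b - i).
  by rewrite -(subnKC le_a) exprD xa !mul0r mul0rn.
have le_b : (b <= i)%N by have := ltn_ord i; lia.
by rewrite -(subnKC le_b) exprD yb mul0r mulr0 mul0rn.
Qed.

Lemma nilpotentN x : is_nilpotent x -> is_nilpotent (- x).
Proof. by case=> k xk; exists k; rewrite exprNn xk mulr0. Qed.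

Lemma nilpotentMl x y : GRing.comm x y -> is_nilpotent y -> is_nilpotent (x * y).
Proof. by move=> cxy [k yk]; exists k; rewrite exprMn_comm // yk mulr0. Qed.

End Nilpotent.

Section Diagonalizable.
Variables (F : fieldType) (n : nat).
Implicit Types M : 'M[F]_n.+1.

(* Commuting diagonalizable matrices are simultaneously diagonalizable, so
   their difference and product are diagonalizable. *)
Lemma diagonalizable_commBM M1 M2 : GRing.comm M1 M2 ->
  diagonalizable M1 -> diagonalizable M2 ->
  diagonalizable (M1 - M2) /\ diagonalizable (M1 * M2).
Proof.
move=> c12 d1 d2.
have [|P Pu /=] := (codiagonalizableP [:: M1; M2]).1.
  split=> [A B|A]; rewrite !inE => /orP[]/eqP->; rewrite ?inE => //.
  - by case/orP=> /eqP->.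
  - by case/orP=> /eqP->; rewrite /comm_mx.
rewrite andbT => /andP[/(similar_diagLR Pu)[e1 ->] /(similar_diagLR Pu)[e2 ->]].
have Vu : invmx P \in unitmx by rewrite unitmx_inv.
split; exists P => //; apply/(similar_diagLR Pu).
  by exists (e1 - e2); rewrite !conjumx // linearB /= mulmxBr mulmxBl.
exists (\row_j (e1 0 j * e2 0 j)); rewrite !conjumx // -mulmx_diag.
by rewrite invmxK -mulmxE !mulmxA mulmxK.
Qed.

(* A diagonalizable nilpotent matrix vanishes: its eigenvalues are nilpotent
   scalars, hence zero. *)
Lemma diagonalizable_nilpotent_eq0 M : diagonalizable M -> is_nilpotent M -> M = 0.
Proof.
case=> P Pu /(similar_diagLR Pu)[d ->] [k].
rewrite conjumx ?unitmx_inv // invmxK.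
have expE (Y : 'M[F]_n.+1) : Y ^+ k = horner_mx Y ('X ^+ k).
  by rewrite rmorphXn /= horner_mx_X.
rewrite expE horner_mx_uconjC // horner_mx_diag => /(congr1 (fun Y => P *m Y *m invmx P)).
rewrite !mulmxA mulmxV // mul1mx mulmxK // mulmx0 mul0mx => dk0.
suff -> : d = 0 by rewrite linear0 mulmx0 mul0mx.
apply/matrixP => i j; rewrite ord1 mxE; move/matrixP/(_ j j): dk0.
by rewrite !mxE eqxx mulr1n hornerXn => /eqP; rewrite expf_eq0 => /andP[_ /eqP].
Qed.

End Diagonalizable.

(* horner2 r s evaluates r : {poly F} at an element s of the commutative ring
   F[Y][X] = {poly {poly F}}; it serves to evaluate polynomials at D (1 + N)
   for commuting matrices D and N. *)
Definition horner2 (F : fieldType) (r : {poly F}) (s : {poly {poly F}}) : {poly {poly F}} :=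
  (map_poly (polyC \o polyC) r).[s].

Lemma horner2_MXaddC (F : fieldType) (p : {poly F}) c s :
  horner2 (p * 'X + c%:P) s = horner2 p s * s + (c%:P)%:P.
Proof. by rewrite /horner2 rmorphD rmorphM /= map_polyX map_polyC hornerD hornerMX hornerC. Qed.

Lemma horner2_YX_split (F : fieldType) (r : {poly F}) :
  exists q, horner2 r ('Y * (1 + 'X)) = r%:P + q * 'X.
Proof.
elim/poly_ind: r => [|p c [q IH]].
  by exists 0; rewrite /horner2 rmorph0 horner0 mul0r addr0.
exists (q * 'Y * (1 + 'X) + p%:P * 'Y).
by rewrite horner2_MXaddC IH !rmorphD !rmorphM /=; ring.
Qed.

Section Perturbation.
Variables (F : fieldType) (n : nat) (D N : 'M[F]_n.+1).
Hypothesis cDN : GRing.comm D N.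

(* phi : F[Y][X] -> matrices is evaluation at Y = D, X = N. *)
Let cDN_horner : commr_rmorph (horner_mx D) N.
Proof. by move=> p; apply/comm_mx_horner/esym. Qed.

Local Notation phi := (horner_morph cDN_horner).

Lemma phi_horner2 r s : phi (horner2 r s) = horner_mx (phi s) r.
Proof.
elim/poly_ind: r => [|p c IH]; first by rewrite /horner2 rmorph0 horner0 !rmorph0.
rewrite horner2_MXaddC rmorphD rmorphM /= IH horner_morphC /= horner_mx_C.
by rewrite rmorphD rmorphM /= horner_mx_X horner_mx_C.
Qed.

(* If N ^+ m = 0, then r(D (1 + N)) ^+ m is a right multiple of r(D):
   expand (r(Y) + q X) ^+ m and kill the pure X ^+ m term. *)
Lemma horner_perturb_exp m r : N ^+ m = 0 ->
  exists W, horner_mx (D * (1 + N)) r ^+ m = horner_mx D r * W.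
Proof.
move=> Nm; have [q Eq] := horner2_YX_split r.
have phiA : phi ('Y * (1 + 'X)) = D * (1 + N).
  rewrite rmorphM rmorphD /= rmorph1 horner_morphC (horner_morphX cDN_horner).
  by rewrite /= horner_mx_X.
rewrite -phiA -phi_horner2 -rmorphXn Eq.
exists (phi (\sum_(i < m) (r%:P + q * 'X) ^+ (m.-1 - i) * (q * 'X) ^+ i)).
rewrite -(subrK ((q * 'X) ^+ m) ((r%:P + q * 'X) ^+ m)) subrXX addrK.
rewrite rmorphD rmorphM /= horner_morphC exprMn rmorphM !rmorphXn /=.
by rewrite (horner_morphX cDN_horner) Nm mulr0 addr0.
Qed.

End Perturbation.

Lemma diagonalizable_split_annihilator (F : fieldType) n (D : 'M[F]_n.+1) :
  diagonalizable D ->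
  exists2 rs : seq F, uniq rs & horner_mx D (\prod_(x <- rs) ('X - x%:P)) = 0.
Proof.
case/diagonalizableP=> rs urs /dvdpP[k Ek]; exists rs => //.
by rewrite Ek rmorphM /= mx_root_minpoly mulr0.
Qed.

Section DiagonalPartCommutant.
Variables (F : fieldType) (n m : nat) (D N B : 'M[F]_n.+1).
Hypotheses (cDN : GRing.comm D N) (Nm : N ^+ m = 0).
Hypothesis cBA : GRing.comm B (D * (1 + N)).

Local Notation A := (D * (1 + N)).
Local Notation C := (B * D - D * B).

Lemma hornerA_eigen x h : horner_mx D (('X - x%:P) * h) = 0 ->
  D * horner_mx A h ^+ m = x%:M * horner_mx A h ^+ m.
Proof.
move=> Dxh0; have [W ->] := horner_perturb_exp cDN h Nm.
apply/eqP; rewrite -subr_eq0 -mulrBl mulrA.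
have -> : D - x%:M = horner_mx D ('X - x%:P) by rewrite rmorphB /= horner_mx_X horner_mx_C.
by move: Dxh0; rewrite rmorphM /= => ->; rewrite mul0r.
Qed.

Lemma commutator_hornerA x h : horner_mx D (('X - x%:P) * h) = 0 ->
  C * horner_mx A h ^+ m = 0.
Proof.
move=> Dxh0; have DE := hornerA_eigen Dxh0.
have cBE : GRing.comm B (horner_mx A h ^+ m) by apply/commrX/comm_mx_horner.
rewrite mulrBl -!mulrA DE cBE !mulrA DE.
have cBx : GRing.comm B x%:M by rewrite /GRing.comm -!mulmxE scalar_mxC.
by rewrite cBx -mulrA cBE mulrA subrr.
Qed.

(* For each root x of the annihilator p of D, C = C u(A) (A - x) ^+ m for
   some u, by a Bezout identity between (X - x) ^+ m and (p / (X - x)) ^+ m. *)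
Lemma commutator_peel (rs : seq F) x : uniq rs -> x \in rs ->
  horner_mx D (\prod_(y <- rs) ('X - y%:P)) = 0 ->
  exists u, C * horner_mx A (u * ('X - x%:P) ^+ m) = C.
Proof.
move=> urs xrs Dp0; set q := \prod_(y <- rs | y != x) ('X - y%:P).
have cop : coprimep (('X - x%:P) ^+ m) (q ^+ m).
  apply/coprimep_expl/coprimep_expr.
  rewrite coprimep_sym coprimep_XsubC /root horner_prod prodf_seq_neq0.
  by apply/allP => y _; apply/implyP; rewrite hornerXsubC subr_eq0 eq_sym.
have [[u w] /= Bez] := Bezout_eq1_coprimepP _ _ cop; exists u.
have Cq0 : C * horner_mx A q ^+ m = 0.
  by apply: (commutator_hornerA (x := x)); rewrite -(bigD1_seq x).
have Cw0 : C * horner_mx A (w * q ^+ m) = 0.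
  by rewrite rmorphM /= comm_horner_mx2 rmorphXn mulrA Cq0 mul0r.
have := congr1 (fun p => C * horner_mx A p) Bez.
by rewrite /= rmorph1 mulr1 rmorphD mulrDr /= Cw0 addr0.
Qed.

(* Peeling all roots of p gives C = C G(A) p(A) ^+ m = 0. *)
Lemma diagonal_part_commutant : diagonalizable D -> GRing.comm B D.
Proof.
case/diagonalizable_split_annihilator=> rs urs Dp0.
have peel_all s : {subset s <= rs} ->
    exists G, C * horner_mx A (G * \prod_(y <- s) ('X - y%:P) ^+ m) = C.
  elim: s => [|x s IH] sub_s; first by exists 1; rewrite big_nil mulr1 rmorph1 mulr1.
  have [G CG] : exists G, C * horner_mx A (G * \prod_(y <- s) ('X - y%:P) ^+ m) = C.
    by apply: IH => y ys; apply: sub_s; rewrite inE ys orbT.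
  have [u Cu] := commutator_peel urs (sub_s x (mem_head x s)) Dp0.
  by exists (u * G); rewrite big_cons mulrACA rmorphM /= mulrA Cu.
have [G] := peel_all rs (fun y ys => ys).
rewrite prodrXl rmorphM /= rmorphXn /=.
have [W ->] := horner_perturb_exp cDN (\prod_(y <- rs) ('X - y%:P)) Nm.
by rewrite Dp0 mul0r mulr0 mulr0 => /esym/eqP; rewrite subr_eq0 => /eqP.
Qed.

End DiagonalPartCommutant.

Ltac comm_tac :=
  lazymatch goal with
  | |- GRing.comm (_ * _) _ => apply/commr_sym/commrM; apply/commr_sym; comm_tac
  | |- GRing.comm (_ + _) _ => apply/commr_sym/commrD; apply/commr_sym; comm_tac
  | |- GRing.comm (- _) _ => apply/commr_sym/commrN; apply/commr_sym; comm_tac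
  | |- GRing.comm 1 _ => apply/commr_sym/commr1
  | |- GRing.comm _ (_ * _) => apply: commrM; comm_tac
  | |- GRing.comm _ (_ + _) => apply: commrD; comm_tac
  | |- GRing.comm _ (- _) => apply: commrN; comm_tac
  | |- GRing.comm _ 1 => apply: commr1
  | _ => first [assumption | apply/commr_sym; assumption | apply: commr_refl]
  end.

Definition JC_decomp (F : fieldType) n (A D T : 'M[F]_n.+1) : Prop :=
  [/\ diagonalizable D, is_nilpotent (T - 1), A = D * T & GRing.comm D T].

Section JordanChevalley.
Variables (F : fieldType) (n : nat).
Implicit Types A B D T : 'M[F]_n.+1.

Lemma JC_unit_diag A D T : A \in unitmx -> JC_decomp A D T -> D \is a GRing.unit.
Proof. by move=> Au [_ _ AE _]; move: Au; rewrite AE unitmx_mul => /andP[]. Qed.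

Lemma JC_commutant A D T B : A \in unitmx -> JC_decomp A D T ->
  GRing.comm B A -> GRing.comm B D /\ GRing.comm B T.
Proof.
move=> Au JC; have Du := JC_unit_diag Au JC; case: JC => dD [k Nk] AE cDT cBA.
have TE : T = 1 + (T - 1) by rewrite addrC subrK.
have cBD : GRing.comm B D.
  apply: (diagonal_part_commutant (N := T - 1) (m := k)) => //; first by comm_tac.
  by rewrite -TE -AE.
split=> //; apply: (mulrI Du).
by rewrite mulrA -cBD -mulrA -AE cBA AE -mulrA.
Qed.

Lemma JC_unique A D1 T1 D2 T2 : A \in unitmx ->
  JC_decomp A D1 T1 -> JC_decomp A D2 T2 -> D1 = D2 /\ T1 = T2.
Proof.
move=> Au JC1 JC2; have D1u := JC_unit_diag Au JC1.
have [dD1 nT1 AE1 c11] := JC1; have [dD2 nT2 AE2 c22] := JC2.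
have [cD21 cD2T1] : GRing.comm D2 D1 /\ GRing.comm D2 T1.
  by apply: (JC_commutant Au JC1); rewrite AE2; comm_tac.
have [cT21 cT2T1] : GRing.comm T2 D1 /\ GRing.comm T2 T1.
  by apply: (JC_commutant Au JC1); rewrite AE2; comm_tac.
have D12 : D1 = D2.
  apply/eqP; rewrite -subr_eq0; apply/eqP/diagonalizable_nilpotent_eq0.
    exact: (diagonalizable_commBM (commr_sym cD21) dD1 dD2).1.
  have -> : D1 - D2 = D2 * (T2 - 1) - D1 * (T1 - 1).
    by rewrite !mulrBr !mulr1 -AE1 -AE2 opprB [RHS]addrC addrA subrK.
  apply: nilpotentD; first by comm_tac.
    by apply: nilpotentMl => //; comm_tac.
  by apply/nilpotentN/nilpotentMl => //; comm_tac.
split=> //; apply: (mulrI D1u).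
by rewrite -AE1 AE2 D12.
Qed.

Lemma JC_mul A1 D1 T1 A2 D2 T2 : A1 \in unitmx -> A2 \in unitmx -> GRing.comm A1 A2 ->
  JC_decomp A1 D1 T1 -> JC_decomp A2 D2 T2 -> JC_decomp (A1 * A2) (D1 * D2) (T1 * T2).
Proof.
move=> A1u A2u cA JC1 JC2.
have [cD1A2 cT1A2] := JC_commutant A1u JC1 (commr_sym cA).
have [cD1D2 cD1T2] := JC_commutant A2u JC2 (commr_sym cD1A2).
have [cT1D2 cT1T2] := JC_commutant A2u JC2 (commr_sym cT1A2).
have [dD1 nT1 AE1 c11] := JC1; have [dD2 nT2 AE2 c22] := JC2.
split.
- exact: (diagonalizable_commBM cD1D2 dD1 dD2).2.
- have -> : T1 * T2 - 1 = (T1 - 1) + T1 * (T2 - 1).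
    by rewrite mulrBr mulr1 [RHS]addrC addrA subrK.
  apply: nilpotentD => //; first by comm_tac.
  by apply: nilpotentMl => //; comm_tac.
- by rewrite AE1 AE2 -mulrA (mulrA T1) cT1D2 !mulrA.
- by comm_tac.
Qed.

Lemma JC_1 : JC_decomp (1 : 'M[F]_n.+1) 1 1.
Proof.
split; rewrite ?mulr1 //; first exact: (diagonalizable_scalar 1).
by exists 1%N; rewrite subrr expr1.
Qed.

End JordanChevalley.

Lemma JC_semigroup (R : realType) (F : fieldType) n (g D T : R -> 'M[F]_n.+1) :
  mx_semigroup g -> (forall x, 0 <= x -> g x \in unitmx) ->
  (forall x, 0 <= x -> JC_decomp (g x) (D x) (T x)) ->
  [/\ mx_semigroup D, mx_semigroup T &
      forall x y, 0 <= x -> 0 <= y -> T x *m D y = D y *m T x].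
Proof.
move=> [g0 gD] gu gJC.
have cg x y : 0 <= x -> 0 <= y -> GRing.comm (g x) (g y).
  by move=> x0 y0; rewrite /GRing.comm -!mulmxE -!gD // addrC.
have [D0 T0] : D 0 = 1 /\ T 0 = 1.
  by apply: (JC_unique (gu 0 (lexx 0)) (gJC 0 (lexx 0))); rewrite g0; apply: JC_1.
have DTD x y : 0 <= x -> 0 <= y -> D (x + y) = D x * D y /\ T (x + y) = T x * T y.
  move=> x0 y0; have xy0 := addr_ge0 x0 y0.
  apply: (JC_unique (gu _ xy0) (gJC _ xy0)); rewrite gD // mulmxE.
  exact: JC_mul (gu x x0) (gu y y0) (cg x y x0 y0) (gJC x x0) (gJC y y0).
split.
- by split=> // x y x0 y0; rewrite mulmxE; case: (DTD x y x0 y0).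
- by split=> // x y x0 y0; rewrite mulmxE; case: (DTD x y x0 y0).
- move=> x y x0 y0; rewrite mulmxE.
  have [_ cgT] := JC_commutant (gu x x0) (gJC x x0) (cg y x y0 x0).
  exact: (JC_commutant (gu y y0) (gJC y y0) (commr_sym cgT)).1.
Qed.

Lemma mxpowE (K : pzRingType) n (A : 'M[K]_n.+1) k : mxpow A k = A ^+ k.
Proof. by elim: k => // k IH; rewrite /mxpow iterS -/(mxpow A k) IH exprS. Qed.

Lemma mult_JC_decomp_map (C : rcfType) (K : fieldType) (f : {rmorphism K -> C[i]})
    n (A D T : 'M[K]_n.+1) :
  mult_JC_decomp f A D T -> JC_decomp (map_mx f A) (map_mx f D) (map_mx f T).
Proof.
case=> dD [k Tk] AE cDT; split=> //.
- exists k; rewrite mxpowE in Tk.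
  by rewrite -(rmorph1 (map_mx f)) -rmorphB -rmorphXn /= Tk map_mx0.
- by rewrite AE map_mxM.
- by rewrite /GRing.comm -!mulmxE -!map_mxM cDT.
Qed.

Lemma mx_semigroup_map (R : realType) (K : fieldType) (L : comUnitRingType)
    (f : {rmorphism K -> L}) n (g : R -> 'M[K]_n) :
  mx_semigroup (fun x => map_mx f (g x)) -> mx_semigroup g.
Proof.
case=> g0 gD; split; first by apply: (@map_mx_inj _ _ f); rewrite g0 map_mx1.
by move=> x y x0 y0; apply: (@map_mx_inj _ _ f); rewrite map_mxM gD.
Qed.

Lemma mult_JC_semigroup (R : realType) (K : fieldType) (C : rcfType)
    (f : {rmorphism K -> C[i]}) n (g D T : R -> 'M[K]_n.+1) :
  mx_semigroup g -> (forall x, 0 <= x -> g x \in unitmx) ->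
  (forall x, 0 <= x -> mult_JC_decomp f (g x) (D x) (T x)) ->
  [/\ mx_semigroup D, mx_semigroup T &
      forall x y, 0 <= x -> 0 <= y -> T x *m D y = D y *m T x].
Proof.
move=> [g0 gD] gu gJC.
have [] := @JC_semigroup R _ n (fun x => map_mx f (g x)) (fun x => map_mx f (D x))
    (fun x => map_mx f (T x)).
- by split=> [|x y x0 y0]; rewrite ?g0 ?map_mx1 ?gD ?map_mxM.
- by move=> x x0; rewrite map_unitmx gu.
- by move=> x x0; apply/mult_JC_decomp_map/gJC.
- move=> /mx_semigroup_map sD /mx_semigroup_map sT cTD.
  split=> // x y x0 y0; apply: (@map_mx_inj _ _ f).
  by rewrite !map_mxM cTD.
Qed.

Theorem mainTheorem7 (R : realType) (d : nat) :
  (forall g D T : R -> 'M[R]_d,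
     mx_semigroup g ->
     (forall x : R, 0 <= x -> g x \in unitmx) ->
     (forall x : R, 0 <= x ->
        mult_JC_decomp (fun r : R => (r%:C)%C) (g x) (D x) (T x)) ->
     [/\ mx_semigroup D, mx_semigroup T &
         forall x y : R, 0 <= x -> 0 <= y -> T x *m D y = D y *m T x])
  /\
  (forall g D T : R -> 'M[R[i]]_d,
     mx_semigroup g ->
     (forall x : R, 0 <= x -> g x \in unitmx) ->
     (forall x : R, 0 <= x ->
        mult_JC_decomp (fun z : R[i] => z) (g x) (D x) (T x)) ->
     [/\ mx_semigroup D, mx_semigroup T &
         forall x y : R, 0 <= x -> 0 <= y -> T x *m D y = D y *m T x]).
Proof.
case: d => [|n].
  by split=> g D T _ _ _; do !split => *; apply/matrixP => -[].
split=> g D T.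
- exact: (@mult_JC_semigroup R R R (real_complex R) n g D T).
- exact: (@mult_JC_semigroup R R[i] R idfun n g D T).
Qed.
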